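(* Consider the general LPP model described in the context, fix $\eta_0\in(0,\infty)$, $u\in\mathbb{R}$, set $\eta=\eta_0+ut^{-2/3}$, and suppose Assumptions A1 and A2 hold. Let $D$ be a probability distribution. If, as $t\to\infty$, $$\frac{L_{\mathcal{L}^-\to(\eta t,t)}-\mu t}{t^{1/3}}-\frac{L_{\mathcal{L}^+\to E^+}+L_{E^+\to(\eta t,t)}-\mu t}{t^{1/3}}\Rightarrow D,$$ then $$\frac{L_{\mathcal{L}^-\to(\eta t,t)}-\mu t}{t^{1/3}}-\frac{L_{\mathcal{L}^+\to(\eta t,t)}-\mu t}{t^{1/3}}\Rightarrow D.$$
   Context: LPP: for independent nonnegative $\{\omega_{i,j}\}$, an up-right path is a sequence of points of $\mathbb{Z}^2$ with increments in $\{(1,0),(0,1)\}$; $L_{S_A\to S_E}=\max_\pi\sum_{(i,j)\in\pi\setminus S_A}\omega_{i,j}$ over up-right paths from $S_A$ to $S_E$ ($-\infty$ if none); for points $A,B$ write $L_{A\to B}$; non-integer coordinates are understood as integer parts. General model: integers $x_k(0)$, $k\in\mathbb{Z}$, with $x_{k+1}(0)<x_k(0)$, $x_0(0)=1$, $x_1(0)<-1$; $\omega_{i,j}$ independent exponential with rate $v_j>0$; $\mathcal{L}^+=\{(k+x_k(0),k):k>0\}$, $\mathcal{L}^-=\{(k+x_k(0),k):k\le0\}$. Assumption A1: there exist $\mu\in\mathbb{R}$ and continuous distribution functions $G_1(\cdot;u),G_2(\cdot;u)$ with $\lim_{t\to\infty}\mathbb{P}((L_{\mathcal{L}^+\to(\eta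 t,t)}-\mu t)/t^{1/3}\le s)=G_1(s;u)$ and $\lim_{t\to\infty}\mathbb{P}((L_{\mathcal{L}^-\to(\eta t,t)}-\mu t)/t^{1/3}\le s)=G_2(s;u)$ for all $s$. Assumption A2: there exist $\kappa,\mu_0\in\mathbb{R}$, $\nu\in(1/3,1)$ and a continuous distribution function $G_0(\cdot;u)$ such that, with $E^+=(\eta t-\kappa t^\nu,t-t^\nu)$, for all $s$: $\lim_{t\to\infty}\mathbb{P}((L_{E^+\to(\eta t,t)}-\mu_0t^\nu)/t^{\nu/3}\le s)=G_0(s;u)$ and $\lim_{t\to\infty}\mathbb{P}((L_{\mathcal{L}^+\to E^+}-\mu t+\mu_0t^\nu)/t^{1/3}\le s)=G_1(s;u)$. ''$\Rightarrow$'' denotes convergence in distribution. *)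

From HB Require Import structures.
From mathcomp Require Import all_boot all_order all_algebra.
From mathcomp Require Import all_classical all_reals all_analysis.
Set Implicit Arguments. Unset Strict Implicit. Unset Printing Implicit Defensive.
Import Order.TTheory GRing.Theory Num.Theory.
Import numFieldTopology.Exports.
Local Open Scope classical_set_scope.
Local Open Scope ring_scope.

Definition mutually_independent d (T : measurableType d) (R : realType)
  (P : probability T R) (I : eqType) (X : I -> T -> R) : Prop :=
  forall (s : seq I) (B : I -> set R), uniq s -> (forall i, measurable (B i)) ->
    P [set w | forall i, i \in s -> B i (X i w)] =
    (\prod_(i <- s) P (X i @^-1` B i))%E.

Definition up_right_step (p q : int * int) : bool :=
  (q == (p.1 + 1, p.2)) || (q == (p.1, p.2 + 1)).

(** LPP value L_{SA -> SE}: supremum over up-right paths a :: s with a in SA,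
    last point in SE, of the sum of weights over the points of the path not in
    SA; -oo if there is no such path (ereal_sup of the empty set). *)
Definition LPP (R : realType) (om : int * int -> R) (SA SE : set (int * int))
  : \bar R :=
  ereal_sup [set y | exists (a : int * int) (s : seq (int * int)),
    [/\ SA a, path up_right_step a s, SE (last a s) &
        y = (\sum_(p <- a :: s | p \notin SA) om p)%:E]].

Definition ipt (R : realType) (a b : R) : int * int := (Num.floor a, Num.floor b).

Definition Lplus (x : int -> int) : set (int * int) :=
  [set z | exists k : int, 0 < k /\ z = (k + x k, k)].
Definition Lminus (x : int -> int) : set (int * int) :=
  [set z | exists k : int, k <= 0 /\ z = (k + x k, k)].

Definition eta_t (R : realType) (eta0 u t : R) : R := eta0 + u * t `^ (- (2 / 3)).
Definition endpt (R : realType) (eta0 u t : R) : int * int :=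
  ipt (eta_t eta0 u t * t) t.
Definition Eplus (R : realType) (eta0 u kappa nu t : R) : int * int :=
  ipt (eta_t eta0 u t * t - kappa * t `^ nu) (t - t `^ nu).

Definition rescale (R : realType) (a t c : R) (X : \bar R) : \bar R :=
  ((X - c%:E) * ((t `^ a)^-1)%:E)%E.

Definition cont_distr_fun (R : realType) (G : R -> R) : Prop :=
  [/\ continuous G, {homo G : x y / x <= y},
      G x @[x --> -oo] --> (0:R) & G x @[x --> +oo] --> (1:R)].

Definition cvg_distr d (T : measurableType d) (R : realType) (P : probability T R)
  (X : R -> T -> \bar R) (D : probability R R) : Prop :=
  forall s : R, {for s, continuous (fun r => fine (D `]-oo, r]%classic))} ->
    (fun t => P [set w | (X t w <= s%:E)%E]) @ +oo --> D `]-oo, s]%classic.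

From HB Require Import structures.
From mathcomp Require Import all_boot all_order all_algebra.
From mathcomp Require Import all_classical all_reals all_analysis.
From mathcomp Require Import measurable_realfun.
From mathcomp Require Import ring lra zify.
Import Order.TTheory GRing.Theory Num.Theory.
Import numFieldTopology.Exports.
Local Open Scope classical_set_scope.
Local Open Scope ring_scope.
Set Implicit Arguments. Unset Strict Implicit. Unset Printing Implicit Defensive.

(* The argument only uses the coupling
     L_{L+ -> E+} + L_{E+ -> (eta t, t)} <= L_{L+ -> (eta t, t)}
   (concatenate paths), A1 for L+ and A2.  Let A and B be the rescaled
   L_{L- -> (eta t, t)} and L_{L+ -> (eta t, t)}, C the rescaled left-hand
   side of the coupling, and C1, Y its two terms rescaled as in A2.  Then
   C = C1 + t^((nu-1)/3) Y with Y tight, so C - C1 -> 0 in probability and C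
   has the limit law G1, like B.  As C <= B and both have the same continuous
   limit law, B - C -> 0 in probability, and a Slutsky-type argument
   transfers the limit law D of A - C to A - B. *)

(** * Convergence in probability and in distribution *)

Definition ereal_close (R : numDomainType) (e : R) (x y : \bar R) :=
  x = y \/ exists a b : R, [/\ x = a%:E, y = b%:E & `|a - b| <= e].

Lemma ereal_closeC (R : numDomainType) (e : R) x y :
  ereal_close e x y -> ereal_close e y x.
Proof.
by move=> [->|[a [b [-> -> ab]]]]; [left | right; exists b, a; rewrite distrC].
Qed.

Lemma ereal_close_le (R : realDomainType) (e s : R) x y : 0 <= e ->
  ereal_close e x y -> (y <= s%:E)%E -> (x <= (s + e)%:E)%E.
Proof.
move=> e0 [->|[a [b [-> -> ab]]]] ys.
  by apply: le_trans ys _; rewrite lee_fin lerDl.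
move: ys ab; rewrite !lee_fin ler_distlC => bs /andP[? _]; lra.
Qed.

Lemma ereal_closeBl (R : realDomainType) (e : R) x y z :
  ereal_close e y z -> ereal_close e (x - y)%E (x - z)%E.
Proof.
move=> [->|[a [b [-> -> ab]]]]; first by left.
case: x => [r| |]; [right | by left | by left].
exists (r - a), (r - b); split => //.
by rewrite (_ : r - a - (r - b) = b - a) 1?distrC//; ring.
Qed.

Lemma measurable_le_EFin d (T : measurableType d) (R : realType)
    (X : T -> \bar R) (s : R) :
  measurable_fun setT X -> measurable [set w | (X w <= s%:E)%E].
Proof.
move=> mX; have := mX measurableT `]-oo, s%:E]%classic (emeasurable_itv _).
by rewrite setTI; congr measurable; apply/seteqP; split => w /=; rewrite in_itv.
Qed.

Lemma nondecreasing_discontinuity (R : realType) (F : R -> R) (x : R) :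
  {homo F : u v / u <= v} -> ~ {for x, continuous F} -> discontinuity F x.
Proof.
move=> ndF ncF.
have cl : cvg (F y @[y --> x^'-]).
  apply: nondecreasing_at_left_is_cvgr; first by near=> z => u v _ _; exact: ndF.
  near=> z; exists (F x) => _ [y /= + <-]; rewrite in_itv /= => /andP[_ yx].
  exact/ndF/ltW.
have cr : cvg (F y @[y --> x^'+]).
  apply: nondecreasing_at_right_is_cvgr; first by near=> z => u v _ _; exact: ndF.
  near=> z; exists (F x) => _ [y /= + <-]; rewrite in_itv /= => /andP[xy _].
  exact/ndF/ltW.
split => //; apply/negP => /eqP e; apply: ncF; apply/left_right_continuousP.
have l1 : lim (F y @[y --> x^'-]) <= F x.
  apply: limr_le => //; near=> y; apply/ndF/ltW; near: y; exact: nbhs_left_lt.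
have l2 : F x <= lim (F y @[y --> x^'+]).
  apply: limr_ge => //; near=> y; apply/ndF/ltW; near: y; exact: nbhs_right_gt.
have ex : lim (F y @[y --> x^'-]) = F x by apply/le_anti; rewrite l1 e l2.
by split; [rewrite -ex | rewrite -ex e].
Unshelve. all: end_near. Qed.

Lemma nondecreasing_continuity_point (R : realType) (F : R -> R) (a b : R) :
  {homo F : u v / u <= v} -> a < b ->
  exists2 r, a < r < b & {for r, continuous F}.
Proof.
move=> ndF ab; apply: contrapT => hn.
have := @discontinuity_countable R a b F (fun u v _ _ => @ndF u v).
have -> : [set r | (r \in `]a, b[) /\ discontinuity F r] = [set` `]a, b[ ].
  apply/seteqP; split => r /=; first by case.
  move=> rab; split => //; apply: nondecreasing_discontinuity => // cr.
  by apply: hn; exists r; rewrite -?in_itv.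
move=> /countable_lebesgue_measure0; rewrite lebesgue_measure_itv /= lte_fin ab.
by move=> /eqP; rewrite -EFinB eqe subr_eq0 gt_eqF.
Qed.

Lemma grid_cover (R : realFieldType) (a h y : R) (m : nat) :
  0 < h -> a <= y <= a + m%:R * h -> exists j : 'I_m.+1, y <= a + j%:R * h < y + h.
Proof.
move=> h0; elim: m => [|m IH] /andP[ay ym].
  by exists ord0; rewrite mul0r addr0 in ym *; apply/andP; split; lra.
have [ym'|my] := leP y (a + m%:R * h).
  by have [j hj] := IH (introT andP (conj ay ym')); exists (widen_ord (leqnSn _) j).
by exists ord_max; rewrite /= -natr1 in ym *; apply/andP; split; lra.
Qed.

Section convergence_in_probability.
Context d (T : measurableType d) (R : realType) (P : probability T R).

Definition pr (A : set T) : R := fine (P A).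

Lemma prE A : measurable A -> P A = (pr A)%:E.
Proof.
move=> mA; rewrite /pr fineK// ge0_fin_numE//.
exact: le_lt_trans (probability_le1 P mA) (ltry 1).
Qed.

Lemma le_pr A B : measurable A -> measurable B -> A `<=` B -> pr A <= pr B.
Proof. by move=> mA mB AB; rewrite -lee_fin -!prE//; apply: le_measure; rewrite ?inE. Qed.

Lemma prU2 A B : measurable A -> measurable B -> pr (A `|` B) <= pr A + pr B.
Proof.
move=> mA mB; rewrite -lee_fin EFinD -!prE//; last exact: measurableU.
exact: measureU2.
Qed.

Lemma prU A B : measurable A -> measurable B -> A `&` B = set0 ->
  pr (A `|` B) = pr A + pr B.
Proof.
move=> mA mB AB; apply/EFin_inj; rewrite EFinD -!prE//; last exact: measurableU.
exact: measureU.
Qed.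

Lemma pr_setC A : measurable A -> pr (~` A) = 1 - pr A.
Proof.
move=> mA; apply/EFin_inj; rewrite EFinB -!prE//; last exact: measurableC.
exact: probability_setC.
Qed.

Lemma le_pr_bigsetU (A : nat -> set T) n : (forall i, measurable (A i)) ->
  pr (\big[setU/set0]_(i < n) A i) <= \sum_(i < n) pr (A i).
Proof.
move=> mA; rewrite -lee_fin -prE; last exact: bigsetU_measurable.
rewrite -sumEFin (eq_bigr (fun i : 'I_n => P (A i))) => [|i _]; last by rewrite -prE.
exact: le_mu_bigsetU.
Qed.

Lemma cvg_pr_near (E : R -> set T) (l e : R) : (forall t, measurable (E t)) ->
  (fun t => P (E t)) @ +oo --> l%:E -> 0 < e ->
  \forall t \near +oo, l - e <= pr (E t) <= l + e.
Proof.
move=> mE /fine_cvgP[_ /cvgr_dist_le El] e0.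
by apply: filterS (El _ e0) => t /=; rewrite ler_distlC.
Qed.

(* An outer bound on the probability that Q fails, so Q need not be measurable. *)
Definition except_prob (eta : R) (Q : T -> Prop) :=
  exists U, [/\ measurable U, pr U <= eta & forall w, ~ U w -> Q w].

Lemma except_probW eta (Q1 Q2 : T -> Prop) : (forall w, Q1 w -> Q2 w) ->
  except_prob eta Q1 -> except_prob eta Q2.
Proof. by move=> Q12 [U [mU pU hU]]; exists U; split=> // w /hU/Q12. Qed.

Lemma except_probI e1 e2 (Q1 Q2 : T -> Prop) :
  except_prob e1 Q1 -> except_prob e2 Q2 ->
  except_prob (e1 + e2) (fun w => Q1 w /\ Q2 w).
Proof.
move=> [U1 [mU1 pU1 hU1]] [U2 [mU2 pU2 hU2]].
exists (U1 `|` U2); split; first exact: measurableU.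
  exact: le_trans (prU2 mU1 mU2) (lerD pU1 pU2).
by move=> w /not_orP[/hU1 ? /hU2 ?].
Qed.

Definition whp (Q : R -> T -> Prop) :=
  forall eta, 0 < eta -> \forall t \near +oo, except_prob eta (Q t).

Lemma whpW (Q1 Q2 : R -> T -> Prop) : (forall t w, Q1 t w -> Q2 t w) ->
  whp Q1 -> whp Q2.
Proof. by move=> Q12 hQ eta /hQ; apply: filterS => t; exact: except_probW (Q12 t). Qed.

Definition cvg_cdf (X : R -> T -> \bar R) (F : R -> R) :=
  forall s, {for s, continuous F} ->
    (fun t => P [set w | (X t w <= s%:E)%E]) @ +oo --> (F s)%:E.

Definition close_in_prob (X Z : R -> T -> \bar R) :=
  forall e, 0 < e -> whp (fun t w => ereal_close e (X t w) (Z t w)).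

Definition bounded_in_prob (X : R -> T -> \bar R) :=
  forall eta, 0 < eta -> exists M : R, \forall t \near +oo,
    except_prob eta (fun w => exists2 x, X t w = x%:E & `|x| <= M).

Lemma le_pr_close (X Z : T -> \bar R) (eps eta s r : R) :
  measurable_fun setT X -> measurable_fun setT Z -> 0 <= eps -> s + eps <= r ->
  except_prob eta (fun w => ereal_close eps (X w) (Z w)) ->
  pr [set w | (Z w <= s%:E)%E] <= pr [set w | (X w <= r%:E)%E] + eta.
Proof.
move=> mX mZ eps0 sr [U [mU pU hU]]; have mXr := measurable_le_EFin r mX.
apply: le_trans (le_pr (measurable_le_EFin s mZ) (measurableU _ _ mXr mU) _) _.
  move=> w /= Zs; have [|/hU XZw] := pselect (U w); [by right | left].
  by apply: le_trans (ereal_close_le eps0 XZw Zs) _; rewrite lee_fin.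
by apply: le_trans (prU2 mXr mU) _; rewrite lerD2l.
Qed.

Lemma cvg_cdf_close (X Z : R -> T -> \bar R) (F : R -> R) :
  {homo F : x y / x <= y} ->
  (forall t, measurable_fun setT (X t)) -> (forall t, measurable_fun setT (Z t)) ->
  close_in_prob X Z -> cvg_cdf X F -> cvg_cdf Z F.
Proof.
move=> ndF mX mZ XZ cX s cFs.
have mXle t r := measurable_le_EFin r (mX t).
apply/fine_cvgP; split.
  by apply: nearW => t; rewrite prE //; exact: measurable_le_EFin.
apply/cvgrPdist_le => e e0; have e4 : 0 < e / 4 by rewrite divr_gt0.
move: cFs => /cvgr_dist_le/(_ _ e4)/nbhs_ballP[dl /= dl0 Fdl].
(* F may jump near s: bracket s by continuity points of F, which are dense. *)
have [r1 /andP[sr1 r1s] cr1] :=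
  nondecreasing_continuity_point ndF (ltac:(lra) : s < s + dl).
have [r0 /andP[r0s sr0] cr0] :=
  nondecreasing_continuity_point ndF (ltac:(lra) : s - dl < s).
have [Fr1 Fr0] : F r1 <= F s + e / 4 /\ F s - e / 4 <= F r0.
  have := Fdl r1; have := Fdl r0; rewrite /ball /= !ler_distlC.
  by do 2?(move=> /(_ ltac:(rewrite ltr_distlC; lra))/andP[? ?]); split.
pose eps := Num.min (r1 - s) (s - r0).
have eps0 : 0 < eps by rewrite lt_min !subr_gt0 sr1 sr0.
have [eps_r1 eps_r0] : eps <= r1 - s /\ eps <= s - r0 by rewrite !ge_min !lexx orbT.
have N1 := cvg_pr_near (mXle^~ r1) (cX r1 cr1) e4.
have N0 := cvg_pr_near (mXle^~ r0) (cX r0 cr0) e4.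
near=> t.
have /andP[_ X1] : F r1 - e / 4 <= pr [set w | (X t w <= r1%:E)%E] <= F r1 + e / 4.
  by near: t.
have /andP[X0 _] : F r0 - e / 4 <= pr [set w | (X t w <= r0%:E)%E] <= F r0 + e / 4.
  by near: t.
have XZt : except_prob (e / 4) (fun w => ereal_close eps (X t w) (Z t w)).
  by near: t; exact: XZ.
have := le_pr_close (mX t) (mZ t) (ltW eps0) (ltac:(lra) : s + eps <= r1) XZt.
have := le_pr_close (mZ t) (mX t) (ltW eps0) (ltac:(lra) : r0 + eps <= s)
  (except_probW (fun w => @ereal_closeC _ _ _ _) XZt).
move=> *; change (`|F s - pr [set w | (Z t w <= s%:E)%E]| <= e).
by rewrite ler_distlC; apply/andP; split; lra.
Unshelve. all: end_near. Qed.

Lemma cvg_cdf_bounded_in_prob (X : R -> T -> \bar R) (G : R -> R) :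
  (forall t, measurable_fun setT (X t)) -> cont_distr_fun G -> cvg_cdf X G ->
  bounded_in_prob X.
Proof.
move=> mX [cG _ G_Ny G_y] cX eta eta0; have eta4 : 0 < eta / 4 by rewrite divr_gt0.
have [a Ga] := filter_ex (cvgr_lt _ G_Ny _ eta4).
have e1 : 1 - eta / 4 < 1 by rewrite gtrBl.
have [b Gb] := filter_ex (cvgr_gt _ G_y _ e1).
have mXle t r := measurable_le_EFin r (mX t).
exists (`|a| + `|b|).
apply: filterS2 (cvg_pr_near (mXle^~ a) (cX a (cG a)) eta4)
  (cvg_pr_near (mXle^~ b) (cX b (cG b)) eta4) => t /andP[_ pa] /andP[pb _].
exists ([set w | (X t w <= a%:E)%E] `|` ~` [set w | (X t w <= b%:E)%E]); split.
- exact: measurableU (mXle t a) (measurableC (mXle t b)).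
- apply: le_trans (prU2 (mXle t a) (measurableC (mXle t b))) _.
  by rewrite pr_setC //; lra.
move=> w /not_orP[] /=; case: (X t w) => [x| |]; last by move=> []; rewrite leNye.
  rewrite !lee_fin => /negP; rewrite -ltNge => ax /contrapT xb; exists x => //.
  have := ler_norm b; have := ler_norm (- a); have := normr_ge0 a.
  have := normr_ge0 b; rewrite normrN ler_norml => *.
  by apply/andP; split; lra.
by move=> _ /contrapT; rewrite leye_eq.
Qed.

Lemma close_in_prob_add_vanishing (X Y Z : R -> T -> \bar R) (c : R -> R) :
  bounded_in_prob X -> bounded_in_prob Y -> c t @[t --> +oo] --> 0 ->
  (\forall t \near +oo, forall w, X t w \is a fin_num -> Y t w \is a fin_num ->
     Z t w = (X t w + (c t)%:E * Y t w)%E) ->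
  close_in_prob X Z.
Proof.
move=> bX bY c0 XYZ e e0 eta eta0; have eta2 : 0 < eta / 2 by rewrite divr_gt0.
have [M1 hX] := bX _ eta2; have [M2 hY] := bY _ eta2.
have M2e : 0 < e / (`|M2| + 1) by rewrite divr_gt0 // ltr_wpDl.
have Nc : \forall t \near +oo, `|c t| < e / (`|M2| + 1).
  by move: c0 => /cvgr_dist_lt/(_ _ M2e); apply: filterS => t; rewrite sub0r normrN.
apply: filterS3 hX hY (filterI Nc XYZ) => t hXt hYt [ct XYZt].
rewrite [eta]splitr; apply: except_probW (except_probI hXt hYt).
move=> w [[x Xx _] [y Yy yM2]]; right; exists x, (x + c t * y); split => //.
  by rewrite XYZt ?Xx ?Yy.
rewrite opprD addrA subrr sub0r normrN normrM.
move: ct; rewrite ltr_pdivlMr ?ltr_wpDl // => ct.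
have := normr_ge0 (c t); have := ler_norm M2; nra.
Qed.

Lemma close_in_prob_of_le (X Z : R -> T -> \bar R) (G : R -> R) :
  (forall t, measurable_fun setT (X t)) -> (forall t, measurable_fun setT (Z t)) ->
  cont_distr_fun G -> cvg_cdf X G -> cvg_cdf Z G ->
  (\forall t \near +oo, forall w, (X t w <= Z t w)%E) ->
  close_in_prob X Z.
Proof.
move=> mX mZ hG cX cZ XZ e e0 eta eta0; have eta2 : 0 < eta / 2 by rewrite divr_gt0.
have mXle t r := measurable_le_EFin r (mX t).
have mZle t r := measurable_le_EFin r (mZ t).
have [M hX] := cvg_cdf_bounded_in_prob mX hG cX eta2.
pose m := Num.Def.archi_bound (2 * `|M| / e).
have Mm : 2 * `|M| <= m%:R * e.
  by rewrite -ler_pdivrMr // ltW // archi_boundP // divr_ge0 // ?ltW.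
(* On the grid s_j of mesh e, P(X <= s_j < Z) = P(X <= s_j) - P(Z <= s_j) -> 0;
   off these events Z lies within one mesh above X. *)
pose s (j : nat) := - `|M| + j%:R * e.
pose gap t j := [set w | (X t w <= (s j)%:E)%E] `&` ~` [set w | (Z t w <= (s j)%:E)%E].
have mgap t j : measurable (gap t j) by apply: measurableI; last apply: measurableC.
pose eta' := eta / 2 / m.+1%:R.
have eta'0 : 0 < eta' / 2 by rewrite !divr_gt0.
have Ngap : \forall t \near +oo, forall j : 'I_m.+1, pr (gap t j) <= eta'.
  apply: filter_forall => j; have [cG _ _ _] := hG.
  apply: filterS3 XZ (cvg_pr_near (mXle^~ (s j)) (cX _ (cG _)) eta'0)
    (cvg_pr_near (mZle^~ (s j)) (cZ _ (cG _)) eta'0) => t XZt /andP[_ Xs] /andP[Zs _].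
  have gapU : [set w | (X t w <= (s j)%:E)%E] =
      gap t j `|` [set w | (Z t w <= (s j)%:E)%E].
    apply/seteqP; split => w /=.
      by have [|] := pselect (Z t w <= (s j)%:E)%E; [right | left].
    by move=> [[]//|]; exact: le_trans (XZt w).
  have disj : gap t j `&` [set w | (Z t w <= (s j)%:E)%E] = set0.
    by apply/seteqP; split => // w [[_]].
  by have := prU (mgap t j) (mZle t (s j)) disj; rewrite -gapU; lra.
apply: filterS3 hX Ngap XZ => t hXt gapt XZt.
have Ugap : except_prob (eta / 2) (fun w => forall j : 'I_m.+1, ~ gap t j w).
  exists (\big[setU/set0]_(j < m.+1) gap t j); split.
  - exact: bigsetU_measurable.
  - apply: le_trans (le_pr_bigsetU m.+1 (mgap t)) _.
    apply: le_trans (ler_sum _ (fun j _ => gapt j)) _.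
    by rewrite sumr_const card_ord -(mulr_natr eta') divfK ?pnatr_eq0.
  - by move=> w Uw j gw; apply: Uw; rewrite -bigcup_mkord; exists j => /=.
rewrite [eta]splitr; apply: except_probW (except_probI hXt Ugap).
move=> w [[x Xx xM] nogap].
have [j /andP[xs sx]] : exists j : 'I_m.+1, x <= s j < x + e.
  apply: grid_cover => //; have := ler_norm M; move: xM; rewrite ler_norml.
  by move=> /andP[? ?] ?; apply/andP; split; lra.
have Zs : (Z t w <= (s j)%:E)%E.
  by apply: contrapT => Zs; apply: (nogap j); split => //=; rewrite Xx lee_fin.
move: (XZt w) Zs; rewrite Xx; case: (Z t w) => [z| |]; rewrite ?leye_eq ?leeNy_eq //.
rewrite !lee_fin => xz zs; right; exists x, z; split => //.
by rewrite ler_distlC; apply/andP; split; lra.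
Qed.

End convergence_in_probability.

Lemma cvg_distr_cdf d (T : measurableType d) (R : realType) (P : probability T R)
    (X : R -> T -> \bar R) (D : probability R R) :
  cvg_distr P X D <-> cvg_cdf P X (fun r => fine (D `]-oo, r]%classic)).
Proof. by split=> h s /h; rewrite (prE D). Qed.

Lemma nondecreasing_fine_cdf (R : realType) (D : probability R R) :
  {homo (fun r => fine (D `]-oo, r]%classic)) : x y / x <= y}.
Proof.
move=> x y xy; apply: (le_pr D) => // z /=.
by rewrite !in_itv /= => /le_trans; apply.
Qed.

(** * Last passage percolation *)

Lemma ereal_sup_addl_le (R : realType) (S : set (\bar R)) (x M : \bar R) :
  x \is a fin_num -> (forall y, S y -> x + y <= M)%E -> (x + ereal_sup S <= M)%E.
Proof.
move=> xf xSM; rewrite -leeBrDl //; apply: ge_ereal_sup => y Sy.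
by rewrite leeBrDl //; exact: xSM.
Qed.

Lemma ereal_sup_add_le (R : realType) (S1 S2 S3 : set (\bar R)) :
  (forall y, S1 y -> y \is a fin_num) ->
  (forall y1 y2, S1 y1 -> S2 y2 -> S3 (y1 + y2)%E) ->
  (ereal_sup S1 + ereal_sup S2 <= ereal_sup S3)%E.
Proof.
move=> S1f S123.
have S1le y1 : S1 y1 -> (y1 + ereal_sup S2 <= ereal_sup S3)%E.
  move=> S1y1; apply: ereal_sup_addl_le (S1f _ S1y1) _ => y2 S2y2.
  exact/ereal_sup_ubound/S123.
case E2: (ereal_sup S2) => [s2| |]; last by rewrite addeNy leNye.
  rewrite -leeBrDr //; apply: ge_ereal_sup => y1 S1y1.
  by rewrite leeBrDr // -E2; exact: S1le.
have [[y1 S1y1]|S10] := pselect (exists y, S1 y).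
  have /fin_numP[y1Ny _] := S1f _ S1y1.
  have := S1le _ S1y1; rewrite E2 addey //.
  by rewrite leye_eq => /eqP ->; rewrite leey.
have -> : ereal_sup S1 = -oo%E.
  by apply/ereal_sup_ninfty => y S1y; exfalso; apply: S10; exists y.
by rewrite addNye leNye.
Qed.

Lemma measurable_LPP d (T : measurableType d) (R : realType)
    (om : int * int -> T -> R) (SA SE : set (int * int)) :
  (forall z, measurable_fun setT (om z)) ->
  measurable_fun setT (fun w => LPP (fun z => om z w) SA SE).
Proof.
move=> mom.
(* LPP is a countable supremum, indexed by the pickled (start, path) pairs. *)
pose admissible (p : (int * int) * seq (int * int)) :=
  [/\ SA p.1, path up_right_step p.1 p.2 & SE (last p.1 p.2)].
pose weight (p : (int * int) * seq (int * int)) w :=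
  \sum_(q <- p.1 :: p.2 | q \notin SA) om q w.
pose f (n : nat) w : \bar R := if unpickle n is Some p then
  if `[< admissible p >] then (weight p w)%:E else -oo%E else -oo%E.
have mf n : measurable_fun setT (f n).
  rewrite /f; case: (unpickle n) => [p|]; last exact: measurable_cst.
  case: `[< admissible p >]; last exact: measurable_cst.
  apply/measurable_EFinP; rewrite /weight.
  under eq_fun do rewrite big_mkcond.
  apply: measurable_sum => q; case: (q \notin SA); [exact: mom | exact: measurable_cst].
suff -> : (fun w => LPP (fun z => om z w) SA SE) = (fun w => esups (f^~ w) 0).
  exact: measurable_fun_esups.
apply/funext => w; apply/le_anti/andP; split.
  apply: le_ereal_sup => _ [a [s [SAa pas SEs ->]]].
  exists (pickle (a, s)) => //.
  by rewrite /f pickleK (_ : `[< admissible (a, s) >] = true) //; apply/asboolP.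
apply: ge_ereal_sup => _ [k _ <-]; rewrite /f.
case: (unpickle k) => [[a s]|]; last exact: leNye.
case: asboolP => [[SAa pas SEs]|_]; last exact: leNye.
by apply: ereal_sup_ubound; exists a, s.
Qed.

Lemma up_right_path_ge (e : int * int) (s : seq (int * int)) :
  path up_right_step e s -> forall q, q \in s ->
  (e.1 <= q.1)%R /\ (e.1 + e.2 < q.1 + q.2)%R.
Proof.
elim: s e => [|q0 s IH] e //= /andP[eq0 pq0s] q.
have [e_q0_1 e_q0_2] : (e.1 <= q0.1)%R /\ (e.1 + e.2 < q0.1 + q0.2)%R.
  by move: eq0 => /orP[] /eqP -> /=; split; lia.
rewrite in_cons => /orP[/eqP -> //|/(IH _ pq0s)[q0_q_1 q0_q_2]].
by split; [exact: le_trans q0_q_1 | exact: lt_trans q0_q_2].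
Qed.

Lemma le_LPP_concat (R : realType) (om : int * int -> R) (SA : set (int * int))
    (E F : int * int) :
  (forall q, SA q -> (q.1 < E.1)%R) ->
  (LPP om SA [set E] + LPP om [set E] [set F] <= LPP om SA [set F])%E.
Proof.
move=> SA_E; apply: ereal_sup_add_le; first by move=> _ [a [s [_ _ _ ->]]].
move=> _ _ [a [s1 [SAa pas1 /= Es1 ->]]] [e [s2 [/= -> pEs2 /= Fs2 ->]]].
exists a, (s1 ++ s2); split => //; first by rewrite cat_path pas1 Es1.
  by rewrite /= last_cat Es1.
rewrite -EFinD -cat_cons big_cat /=; congr (_ + _)%:E.
rewrite big_cons (_ : (E \notin [set E]) = false); last first.
  by apply/negbTE; rewrite negbK inE.
rewrite big_seq_cond [RHS]big_seq_cond; apply: eq_bigl => q.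
case s2q: (q \in s2) => //=; have [Eq1 Eq2] := up_right_path_ge pEs2 s2q.
rewrite (_ : (q \notin [set E]) = true); last first.
  by apply/negP => /set_mem /= qE; rewrite qE ltxx in Eq2.
by apply/esym/negP => /set_mem /SA_E; rewrite ltNge Eq1.
Qed.

Lemma Lplus_lt0 (x : int -> int) :
  (forall k, x (k + 1) < x k) -> x 1 < -1 -> forall q, Lplus x q -> (q.1 < 0)%R.
Proof.
move=> x_dec x1 _ [[n|n] [/= n0 ->]] //=.
suff : forall n : nat, n.+1%:Z + x n.+1%:Z <= 1 + x 1 by case: n n0 => // n _ /(_ n); lia.
elim => // m IH; have := x_dec m.+1%:Z.
by rewrite (_ : m.+1%:Z + 1 = m.+2%:Z) //; lia.
Qed.

(** * Scaling *)

Lemma cvg_powRN_pinfty (R : realType) (p : R) : 0 < p -> t `^ (- p) @[t --> +oo] --> 0.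
Proof.
move=> p0; apply/cvgrPdist_lt => e e0.
pose T0 := (2 / e) `^ p^-1.
have T00 : 0 < T0 by rewrite powR_gt0 // divr_gt0.
near=> t.
have tT : T0 <= t by near: t; apply: nbhs_pinfty_ge; exact: num_real.
have t0 : 0 < t by exact: lt_le_trans T00 tT.
rewrite sub0r normrN ger0_norm ?powR_ge0 // powRN.
have e2 : 2 / e <= t `^ p.
  rewrite (_ : 2 / e = T0 `^ p); last first.
    by rewrite -powRrM mulVf ?gt_eqF // powRr1 // ltW ?divr_gt0.
  by apply: ge0_ler_powR => //; rewrite ?nnegrE ltW.
rewrite -[e in _ < e]invrK ltf_pV2 ?posrE ?invr_gt0 ?powR_gt0 //.
have ie : 0 < e^-1 by rewrite invr_gt0.
by apply: lt_le_trans e2; lra.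
Unshelve. all: end_near. Qed.

Lemma cvg_powR_ratio (R : realType) (a b : R) : a < b ->
  (t `^ a / t `^ b) @[t --> +oo] --> 0.
Proof.
move=> ab; have ba : 0 < b - a by rewrite subr_gt0.
apply: cvg_trans (cvg_powRN_pinfty ba); apply: near_eq_cvg; near=> t.
have t0 : 0 < t by near: t; apply: nbhs_pinfty_gt; exact: num_real.
by rewrite opprB -powRB //; apply/implyP => _; rewrite gt_eqF.
Unshelve. all: end_near. Qed.

Lemma Eplus_fst_ge0 (R : realType) (eta0 u kappa nu : R) : 0 < eta0 -> nu < 1 ->
  \forall t \near +oo, (0 <= (Eplus eta0 u kappa nu t).1)%R.
Proof.
move=> eta00 nu1; have p1 : 0 < 2 / 3 :> R by lra.
have p2 : 0 < 1 - nu by lra.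
have f_cvg : eta0 + u * t `^ (- (2 / 3)) - kappa * t `^ (- (1 - nu)) @[t --> +oo]
    --> eta0 + u * 0 - kappa * 0.
  apply: cvgB; first apply: cvgD; first exact: cvg_cst.
    by apply: cvgM; [exact: cvg_cst | exact: cvg_powRN_pinfty].
  by apply: cvgM; [exact: cvg_cst | exact: cvg_powRN_pinfty].
rewrite !mulr0 addr0 subr0 in f_cvg.
near=> t.
have t0 : 0 < t by near: t; apply: nbhs_pinfty_gt; exact: num_real.
have ft : 0 < eta0 + u * t `^ (- (2 / 3)) - kappa * t `^ (- (1 - nu)).
  by near: t; exact: cvgr_gt _ f_cvg _ eta00.
rewrite /Eplus /ipt /= floor_ge0 /eta_t.
have -> : t `^ nu = t `^ (- (1 - nu)) * t.
  rewrite -[X in _ * X]powRr1 ?ltW // -powRD ?opprB ?subrK //.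
  by apply/implyP => _; rewrite gt_eqF.
nra.
Unshelve. all: end_near. Qed.

Lemma LPP_through_Eplus_le (R : realType) (x : int -> int) (eta0 u kappa nu : R) :
  (forall k, x (k + 1) < x k) -> x 1 < -1 -> 0 < eta0 -> nu < 1 ->
  \forall t \near +oo, forall om : int * int -> R,
    (LPP om (Lplus x) [set Eplus eta0 u kappa nu t] +
     LPP om [set Eplus eta0 u kappa nu t] [set endpt eta0 u t]
       <= LPP om (Lplus x) [set endpt eta0 u t])%E.
Proof.
move=> x_dec x1 eta00 nu1; apply: filterS (Eplus_fst_ge0 u kappa eta00 nu1) => t E0 om.
by apply: le_LPP_concat => q /(Lplus_lt0 x_dec x1) q0; exact: lt_le_trans q0 E0.
Qed.

Lemma measurable_rescale d (T : measurableType d) (R : realType) (a t c : R)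
    (X : T -> \bar R) :
  measurable_fun setT X -> measurable_fun setT (fun w => rescale a t c (X w)).
Proof.
move=> mX; apply: emeasurable_funM; last exact: measurable_cst.
by apply: emeasurable_funB => //; exact: measurable_cst.
Qed.

Lemma le_rescale (R : realType) (a t c : R) : {homo rescale a t c : X Y / (X <= Y)%E}.
Proof.
move=> X Y XY; apply: lee_wpmul2r; last exact: leeB.
by rewrite lee_fin invr_ge0 powR_ge0.
Qed.

Lemma rescale_fin_numE (R : realType) (a t c : R) (X : \bar R) : 0 < t ->
  (rescale a t c X \is a fin_num) = (X \is a fin_num).
Proof.
move=> t0; have k0 : 0 < (t `^ a)^-1 by rewrite invr_gt0 powR_gt0.
by case: X => [x| |]; rewrite /rescale /= ?gt0_mulye ?gt0_mulNye ?lte_fin.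
Qed.

Lemma rescaleD (R : realType) (a b t c1 c2 : R) (L1 L2 : \bar R) : 0 < t ->
  L1 \is a fin_num -> L2 \is a fin_num ->
  rescale a t (c1 + c2) (L1 + L2)%E =
  (rescale a t c1 L1 + (t `^ b / t `^ a)%:E * rescale b t c2 L2)%E.
Proof.
move=> t0 /fineK <- /fineK <-; rewrite /rescale -EFinD -!EFinB -!EFinM -EFinD.
have ta : t `^ a != 0 by rewrite gt_eqF // powR_gt0.
have tb : t `^ b != 0 by rewrite gt_eqF // powR_gt0.
by congr EFin; field; apply/andP.
Qed.

Unset Implicit Arguments.

Theorem proposition2p6 (R : realType) (d : measure_display)
  (T : measurableType d) (P : probability T R)
  (* initial configuration x_k(0) *)
  (x : int -> int)
  (hx_dec : forall k : int, x (k + 1) < x k)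
  (hx0 : x 0 = 1) (hx1 : x 1 < -1)
  (* independent exponential weights of rate v_j *)
  (v : int -> R) (hv : forall j, 0 < v j)
  (omega : int * int -> {RV P >-> R})
  (hind : mutually_independent P (fun z => (omega z : T -> R)))
  (hexp : forall (z : int * int) (A : set R), measurable A ->
     distribution P (omega z) A = exponential_prob (v z.2) A)
  (* parameters *)
  (eta0 u : R) (heta0 : 0 < eta0)
  (* Assumption A1 *)
  (mu : R) (G1 G2 : R -> R)
  (hG1 : cont_distr_fun G1) (hG2 : cont_distr_fun G2)
  (A1p : forall s : R,
     (fun t => P [set w | (rescale (3^-1) t (mu * t)
        (LPP (fun z => omega z w) (Lplus x) [set endpt eta0 u t]) <= s%:E)%E])
       @ +oo --> (G1 s)%:E)
  (A1m : forall s : R,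
     (fun t => P [set w | (rescale (3^-1) t (mu * t)
        (LPP (fun z => omega z w) (Lminus x) [set endpt eta0 u t]) <= s%:E)%E])
       @ +oo --> (G2 s)%:E)
  (* Assumption A2 *)
  (kappa mu0 nu : R) (hnu : 3^-1 < nu < 1) (G0 : R -> R)
  (hG0 : cont_distr_fun G0)
  (A2a : forall s : R,
     (fun t => P [set w | (rescale (nu / 3) t (mu0 * t `^ nu)
        (LPP (fun z => omega z w) [set Eplus eta0 u kappa nu t]
             [set endpt eta0 u t]) <= s%:E)%E])
       @ +oo --> (G0 s)%:E)
  (A2b : forall s : R,
     (fun t => P [set w | (rescale (3^-1) t (mu * t - mu0 * t `^ nu)
        (LPP (fun z => omega z w) (Lplus x) [set Eplus eta0 u kappa nu t])
          <= s%:E)%E])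
       @ +oo --> (G1 s)%:E)
  (* the limit distribution D *)
  (D : probability R R)
  (hD : cvg_distr P (fun t w =>
      (rescale (3^-1) t (mu * t)
         (LPP (fun z => omega z w) (Lminus x) [set endpt eta0 u t])
       - rescale (3^-1) t (mu * t)
         (LPP (fun z => omega z w) (Lplus x) [set Eplus eta0 u kappa nu t]
          + LPP (fun z => omega z w) [set Eplus eta0 u kappa nu t]
                [set endpt eta0 u t]))%E) D) :
  cvg_distr P (fun t w =>
      (rescale (3^-1) t (mu * t)
         (LPP (fun z => omega z w) (Lminus x) [set endpt eta0 u t])
       - rescale (3^-1) t (mu * t)
         (LPP (fun z => omega z w) (Lplus x) [set endpt eta0 u t]))%E) D.
Proof.
have [_ ndG1 _ _] := hG1; have /andP[_ nu_lt1] := hnu.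
pose L w SA SE := LPP (fun z => omega z w) SA SE.
pose E t := [set Eplus eta0 u kappa nu t]; pose Z t := [set endpt eta0 u t].
pose A t w := rescale (3^-1) t (mu * t) (L w (Lminus x) (Z t)).
pose B t w := rescale (3^-1) t (mu * t) (L w (Lplus x) (Z t)).
pose C t w := rescale (3^-1) t (mu * t) (L w (Lplus x) (E t) + L w (E t) (Z t))%E.
pose C1 t w := rescale (3^-1) t (mu * t - mu0 * t `^ nu) (L w (Lplus x) (E t)).
pose Y t w := rescale (nu / 3) t (mu0 * t `^ nu) (L w (E t) (Z t)).
have mL SA SE : measurable_fun setT (fun w => L w SA SE).
  by apply: measurable_LPP => z; exact: measurable_funP.
have mres a t c SA SE : measurable_fun setT (fun w => rescale a t c (L w SA SE)).
  exact: measurable_rescale.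
have mC t : measurable_fun setT (C t) by apply/measurable_rescale/emeasurable_funD.
have bC1 : bounded_in_prob P C1 :=
  cvg_cdf_bounded_in_prob (fun t => mres _ t _ _ _) hG1 (fun s _ => A2b s).
have bY : bounded_in_prob P Y :=
  cvg_cdf_bounded_in_prob (fun t => mres _ t _ _ _) hG0 (fun s _ => A2a s).
have nu3 : nu / 3 < 3^-1 by lra.
have C1C : close_in_prob P C1 C.
  apply: close_in_prob_add_vanishing bC1 bY (cvg_powR_ratio nu3) _.
  near=> t => w; have t0 : 0 < t by near: t; apply: nbhs_pinfty_gt; exact: num_real.
  rewrite /C1 /Y !rescale_fin_numE // => L1f L2f.
  by rewrite /C -{1}[mu * t](subrK (mu0 * t `^ nu)) (rescaleD _ (nu / 3)).
have cC : cvg_cdf P C G1 :=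
  cvg_cdf_close ndG1 (fun t => mres _ t _ _ _) mC C1C (fun s _ => A2b s).
have CB : close_in_prob P C B.
  apply: close_in_prob_of_le mC (fun t => mres _ t _ _ _) hG1 cC (fun s _ => A1p s) _.
  apply: filterS (LPP_through_Eplus_le u kappa hx_dec hx1 heta0 nu_lt1) => t LE w.
  exact/le_rescale/LE.
move/cvg_distr_cdf: hD => hD; apply/cvg_distr_cdf.
apply: cvg_cdf_close (nondecreasing_fine_cdf D) _ _ _ hD.
- by move=> t; exact: emeasurable_funB (mres _ _ _ _ _) (mC t).
- by move=> t; exact: emeasurable_funB (mres _ _ _ _ _) (mres _ _ _ _ _).
- by move=> e e0; apply: whpW (CB e e0) => t w; exact: ereal_closeBl.
Unshelve. all: end_near. Qed.
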